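(* Let $\Sigma=(X,\mathcal{S},\phi)$ be a forward complete dynamical system. Let $t_1>0$, $G_0>0$, and let $\beta$ be a function of class $\mathcal{K}_\infty$ such that $\limsup_{r\downarrow 0}\frac{\beta(r)}{r}<+\infty$ and $$\|\phi(t,x,\sigma)\|\le G_0\,\beta(\|x\|)\quad \text{for all } t\in[0,t_1],\ x\in X,\ \sigma\in\mathcal{S}.$$ Then the following statements are equivalent: (i) $\Sigma$ is USGES; (ii) for every $p>0$ there exists a nondecreasing function $k:\mathbb{R}_+\to\mathbb{R}_+$ such that $$\int_0^{+\infty}\|\phi(t,x,\sigma)\|^p\,dt\le k(\|x\|)^p\|x\|^p\quad\text{for all } x\in X,\ \sigma\in\mathcal{S};$$ (iii) there exist $p>0$ and a nondecreasing function $k:\mathbb{R}_+\to\mathbb{R}_+$ such that the inequality in (ii) holds for all $x\in X$ and $\sigma\in\mathcal{S}$.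
   Context: $(X,\|\cdot\|)$ is a Banach space and $B_X(x,r)$ denotes the closed ball of center $x$ and radius $r$. A function $\alpha:\mathbb{R}_+\to\mathbb{R}_+$ is of class $\mathcal{K}$ if it is continuous, increasing and $\alpha(0)=0$; of class $\mathcal{K}_\infty$ if moreover unbounded. Let $\mathcal{Q}$ be a nonempty set and $\mathcal{S}$ a set of functions $\sigma:\mathbb{R}_+\to\mathcal{Q}$ which is closed by time-shift (for $\sigma\in\mathcal{S}$, $\tau\ge0$, the function $\mathbb{T}_\tau\sigma:s\mapsto\sigma(\tau+s)$ is in $\mathcal{S}$) and closed by concatenation (for $\sigma_1,\sigma_2\in\mathcal{S}$, $\tau>0$, the function equal to $\sigma_1$ on $[0,\tau]$ and with $\sigma(\tau+t)=\sigma_2(t)$ for $t>0$ is in $\mathcal{S}$). A triple $\Sigma=(X,\mathcal{S},\phi)$ with $\phi:\mathbb{R}_+\times X\times\mathcal{S}\to X$ is a forward complete dynamical system if: (i) $\phi(0,x,\sigma)=x$; (ii) if $\tilde\sigma=\sigma$ on $[0,t]$ then $\phi(t,x,\tilde\sigma)=\phi(t,x,\sigma)$; (iii) $t\mapsto\phi(t,x,\sigma)$ is continuous; (iv) $\phi(\tau,\phi(t,x,\sigma),\mathbb{T}_t\sigma)=\phi(t+\tau,x,\sigma)$ for all $t,\tau\ge0$, $x\in X$, $\sigma\in\mathcal{S}$. $\Sigma$ is uniformly semi-globally exponentially stable at the origin (USGES) if for every $r>0$ there exist $M(r)>0$, $\lambda(r)>0$ such that $\|\phi(t,x,\sigma)\|\le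 M(r)e^{-\lambda(r)t}\|x\|$ for all $t\ge0$, $x\in B_X(0,r)$, $\sigma\in\mathcal{S}$. *)

From HB Require Import structures.
From mathcomp Require Import all_boot all_order all_algebra.
From mathcomp Require Import all_classical all_reals all_analysis.
Set Implicit Arguments. Unset Strict Implicit. Unset Printing Implicit Defensive.
Import Order.TTheory GRing.Theory Num.Def Num.Theory.
Import numFieldNormedType.Exports.
Local Open Scope classical_set_scope.
Local Open Scope ring_scope.

(* Time-indexed signals sigma : R_+ -> Q are represented as functions R -> Q;
   only their values on [0, +oo) are relevant. *)

Section Defs.
Variables (R : realType) (X : normedModType R) (Q : Type).

Definition tshift (tau : R) (s : R -> Q) : R -> Q := fun t => s (tau + t).

Definition concat (s1 s2 : R -> Q) (tau : R) : R -> Q :=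
  fun t => if t <= tau then s1 t else s2 (t - tau).

Definition closed_by_shift (S : set (R -> Q)) : Prop :=
  forall s tau, S s -> 0 <= tau -> S (tshift tau s).

Definition closed_by_concat (S : set (R -> Q)) : Prop :=
  forall s1 s2 tau, S s1 -> S s2 -> 0 < tau -> S (concat s1 s2 tau).

Definition forward_complete_dynsys (S : set (R -> Q))
    (phi : R -> X -> (R -> Q) -> X) : Prop :=
  [/\ closed_by_shift S /\ closed_by_concat S,
      (forall x s, S s -> phi 0 x s = x),
      (forall t x s s', S s -> S s' -> 0 <= t ->
                   (forall u, 0 <= u <= t -> s' u = s u) ->
                   phi t x s' = phi t x s),
      (forall x s, S s ->
                    {within `[0, +oo[, continuous (fun t => phi t x s)})
    & (forall t tau x s, S s -> 0 <= t -> 0 <= tau ->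
                   phi tau (phi t x s) (tshift t s) = phi (t + tau) x s)].

Definition USGES (S : set (R -> Q)) (phi : R -> X -> (R -> Q) -> X) : Prop :=
  forall r : R, 0 < r -> exists M lam : R, 0 < M /\ 0 < lam /\
    forall t x s, 0 <= t -> `|x| <= r -> S s ->
      `|phi t x s| <= M * expR (- lam * t) * `|x|.

(* class K_infinity, for functions R_+ -> R_+ (represented on [0,+oo)) *)
Definition class_Kinf (beta : R -> R) : Prop :=
  [/\ forall r, 0 <= r -> 0 <= beta r,
      {within `[0, +oo[, continuous beta},
      (forall a b, 0 <= a -> a < b -> beta a < beta b),
      beta 0 = 0
    & forall M, exists r, 0 <= r /\ M < beta r].

Definition nondecr_nonneg (k : R -> R) : Prop :=
  (forall r, 0 <= r -> 0 <= k r) /\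
  (forall a b, 0 <= a -> a <= b -> k a <= k b).

Definition Lp_bound (S : set (R -> Q)) (phi : R -> X -> (R -> Q) -> X)
    (p : R) (k : R -> R) : Prop :=
  forall x s, S s ->
    (\int[lebesgue_measure]_(t in `[0%R, +oo[)
        ((`|phi t x s| `^ p)%:E) <= ((k `|x|) `^ p * `|x| `^ p)%:E)%E.

End Defs.

(* (i) => (ii): on the ball of radius n + 1 the USGES estimate
   M e^(-lam t) |x| integrates to M^p |x|^p / (lam p); a nondecreasing k is
   obtained from the partial sums of these constants.
   (iii) => (i): by the transient bound over windows of length t1, a state above
   G0 beta(y) at time t forces the trajectory above y on all of [t - t1, t], which
   the L^p bound forbids once y^p t1 exceeds k(|x|)^p |x|^p.  Since beta grows at
   most linearly near 0, this yields a uniform bound |phi t x s| <= C |x| on each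
   ball.  Feeding that bound back into the L^p estimate gives a time T at which
   every trajectory from the ball has halved, and iterating the halving gives
   exponential decay. *)

From HB Require Import structures.
From mathcomp Require Import all_boot all_order all_algebra.
From mathcomp Require Import all_classical all_reals all_analysis.
From mathcomp Require Import measurable_realfun.
From mathcomp Require Import ring lra.
Set Implicit Arguments.
Unset Strict Implicit.
Unset Printing Implicit Defensive.
Import Order.TTheory GRing.Theory Num.Def Num.Theory.
Import numFieldNormedType.Exports.
Local Open Scope classical_set_scope.
Local Open Scope ring_scope.

Lemma powRVK (R : realType) (a p : R) : 0 <= a -> p != 0 -> (a `^ p^-1) `^ p = a.
Proof. by move=> a0 p0; rewrite -powRrM mulVf // powRr1. Qed.

Lemma class_Kinf_nondecreasing (R : realType) (beta : R -> R) (a b : R) :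
  class_Kinf beta -> 0 <= a -> a <= b -> beta a <= beta b.
Proof.
case=> _ _ beta_incr _ _ a0.
by rewrite le_eqVlt => /predU1P[-> //|/(beta_incr _ _ a0)/ltW].
Qed.

Lemma class_Kinf_reflect_lt (R : realType) (beta : R -> R) (a b : R) :
  class_Kinf beta -> 0 <= b -> beta a < beta b -> a < b.
Proof.
move=> Kbeta b0; apply: contraTT; rewrite -!leNgt => ba.
exact: class_Kinf_nondecreasing.
Qed.

Lemma ge0_window_ind (R : realType) (T : R) (P : R -> Prop) : 0 < T ->
  (forall t, 0 <= t <= T -> P t) -> (forall t, T < t -> P (t - T) -> P t) ->
  forall t, 0 <= t -> P t.
Proof.
move=> T0 base step.
suff windows : forall n : nat, forall t, 0 <= t <= n%:R * T -> P t.
  move=> t t0; apply: (windows (truncn (t / T)).+1).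
  by rewrite t0 /= -ler_pdivrMr //; exact/ltW/truncnS_gt.
elim=> [|n IH] t /andP[t0 tn].
  by apply: base; rewrite t0 (le_trans tn) // mul0r ltW.
have [tT|tT] := leP t T; first by apply: base; rewrite t0 tT.
apply: step => //; apply: IH.
by move: tn; rewrite -natr1 mulrDl mul1r; lra.
Qed.

Lemma ge0_integral_ge_cst_itv (R : realType) (f : R -> R) (a b c : R) :
  measurable_fun (`[0, +oo[ : set R) (fun t => (f t)%:E) ->
  (forall t, 0 <= t -> 0 <= f t) -> 0 <= a -> 0 <= b -> 0 <= c ->
  (forall u, a <= u <= a + b -> c <= f u) ->
  ((c * b)%:E <= \int[lebesgue_measure]_(t in `[0%R, +oo[) (f t)%:E)%E.
Proof.
move=> mf f0 a0 b0 c0 fc.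
have sub : `[a, a + b] `<=` (`[0, +oo[ : set R).
  by move=> u /=; rewrite !in_itv /= andbT => /andP[au _]; exact: le_trans au.
have ab : lebesgue_measure (`[a, a + b] : set R) = b%:E.
  rewrite lebesgue_measure_itv /= lte_fin ltrDl.
  by case: ltgtP b0 => // [_ _|<- _]; rewrite // -EFinD addrAC subrr add0r.
apply: (@le_trans _ _ (\int[lebesgue_measure]_(t in `[a, (a + b)%R]) (f t)%:E)%E).
  rewrite EFinM -ab -integral_cst //; apply: ge0_le_integral => //.
  exact: (measurable_funS _ sub mf).
apply: ge0_subset_integral => //= u; rewrite in_itv /= andbT => u0.
by rewrite lee_fin f0.
Qed.

Lemma class_Kinf_le_linear (R : realType) (beta : R -> R) :
  class_Kinf beta ->
  (limf_esup (fun r : R => (beta r / r)%:E) (0%R^'+) < +oo)%E ->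
  forall Y, exists L, 0 < L /\ forall y, 0 <= y <= Y -> beta y <= L * y.
Proof.
move=> Kbeta /ereal_inf_lt[_ [V V0 <-]] supV Y.
have [beta_ge0 _ _ beta0 _] := Kbeta.
have /nbhs_ballP[e /= e0 eV] := V0.
have [M supVM] : exists M : R, (ereal_sup [set (beta r / r)%:E | r in V] <= M%:E)%E.
  by case: (ereal_sup _) supV => [r _|//|_]; [exists r|exists 0; rewrite leNye].
have near0 y : 0 < y < e -> beta y <= M * y.
  move=> /andP[y0 ye]; rewrite -ler_pdivrMr // -lee_fin (le_trans _ supVM) //.
  apply: ereal_sup_ubound; exists y => //; apply: eV => //.
  by rewrite /ball /= sub0r normrN gtr0_norm.
exists (Num.max 1 (Num.max M (beta Y / e))); split; first by rewrite lt_max ltr01.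
move=> y /andP[y0 yY]; have [->|y_neq0] := eqVneq y 0; first by rewrite beta0 mulr0.
have {y_neq0}y_gt0 : 0 < y by rewrite lt_def y_neq0 y0.
have [ye|ey] := ltP y e.
  by rewrite (le_trans (near0 y _)) ?y_gt0 // ler_pM2r // !le_max lexx !orbT.
apply: (le_trans (class_Kinf_nondecreasing Kbeta y0 yY)).
apply: (@le_trans _ _ (beta Y / e * y)); last by rewrite ler_pM2r // !le_max lexx !orbT.
by rewrite mulrAC ler_pdivlMr // ler_wpM2l // beta_ge0 // (le_trans y0).
Qed.

Lemma ge0_integral_le_exp_decay (R : realType) (g : R -> R) (C r : R) :
  measurable_fun (`[0, +oo[ : set R) (fun t => (g t)%:E) -> 0 < r -> 0 <= C ->
  (forall t, 0 <= t -> 0 <= g t <= C * expR (- r * t)) ->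
  (\int[lebesgue_measure]_(t in `[0%R, +oo[) (g t)%:E <= (C / r)%:E)%E.
Proof.
move=> mg r0 C0 g_le.
have pdf_ge0 t : (0 <= (exponential_pdf r t)%:E)%E.
  by rewrite lee_fin exponential_pdf_ge0 ?ltW.
have m_pdf : measurable_fun setT (fun t : R => ((exponential_pdf r t)%:E : \bar R)).
  by apply/measurable_EFinP; exact: measurable_exponential_pdf.
apply: (@le_trans _ _ (\int[lebesgue_measure]_(t in `[0%R, +oo[)
    ((C / r)%:E * (exponential_pdf r t)%:E))%E).
  apply: ge0_le_integral => //.
  - by move=> t /=; rewrite in_itv /= andbT lee_fin => /g_le /andP[].
  - exact/emeasurable_funM/measurable_funTS.
  move=> t /=; rewrite in_itv /= andbT => t0.
  rewrite -EFinM lee_fin exponential_pdfE // mulrA divfK ?gt_eqF //.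
  by have /andP[] := g_le t t0.
rewrite ge0_integralZl_EFin ?divr_ge0 ?(ltW r0) //; last exact: measurable_funTS.
rewrite -[leRHS]mule1 lee_wpmul2l ?lee_fin ?divr_ge0 ?(ltW r0) //.
by rewrite -(integral_exponential_pdf r0) ge0_subset_integral.
Qed.

Lemma exists_nondecr_powR_majorant (R : realType) (B : nat -> R) (p : R) :
  0 < p -> (forall n, 0 <= B n) ->
  exists k, nondecr_nonneg k /\ forall a, B (truncn a) <= k a `^ p.
Proof.
move=> p0 B0; pose D n := \sum_(i < n.+1) B i.
have D_mono : {homo D : m n / (m <= n)%N >-> m <= n}.
  move=> m n mn; rewrite /D -!(big_mkord xpredT).
  by rewrite (@big_cat_nat _ _ _ m.+1 0 n.+1) //= lerDl sumr_ge0.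
have D_ge0 n : 0 <= D n by apply: sumr_ge0.
exists (fun a => D (truncn a) `^ p^-1); split; first split.
- by move=> a _; exact: powR_ge0.
- move=> a b a0 ab; apply: ge0_ler_powR; rewrite ?nnegrE ?invr_ge0 ?(ltW p0) //.
  by apply: D_mono; exact: le_truncn.
move=> a; rewrite powRVK ?gt_eqF //.
by rewrite /D big_ord_recr /= lerDr sumr_ge0.
Qed.

Section trajectories.
Variables (R : realType) (X : normedModType R) (Q : Type).
Variables (S : set (R -> Q)) (phi : R -> X -> (R -> Q) -> X).
Hypothesis dynsys : forward_complete_dynsys S phi.

Lemma S_tshift s u : S s -> 0 <= u -> S (tshift u s).
Proof. by case: dynsys => [[shift _] _ _ _ _]; exact: shift. Qed.

Lemma phi_split t u x s : S s -> 0 <= u <= t ->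
  phi t x s = phi (t - u) (phi u x s) (tshift u s).
Proof.
case: dynsys => _ _ _ _ cocycle Ss /andP[u0 ut].
by rewrite cocycle ?subr_ge0 // addrC subrK.
Qed.

Lemma measurable_powR_norm_phi p x s : S s ->
  measurable_fun (`[0, +oo[ : set R) (fun t => (`|phi t x s| `^ p)%:E).
Proof.
case: dynsys => _ _ _ cont _ Ss.
apply/measurable_EFinP; apply: (measurableT_comp (measurable_powR _)) => //.
apply: subspace_continuous_measurable_fun => // t.
by apply: continuous_comp; [exact: cont | exact: norm_continuous].
Qed.

Lemma Lp_bound_level_time p k x s a b y : 0 <= p -> Lp_bound S phi p k -> S s ->
  0 <= a -> 0 <= b -> 0 <= y -> (forall u, a <= u <= a + b -> y <= `|phi u x s|) ->
  y `^ p * b <= k `|x| `^ p * `|x| `^ p.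
Proof.
move=> p0 Lp Ss a0 b0 y0 phi_ge.
rewrite -lee_fin (le_trans _ (Lp x s Ss)) //.
rewrite (ge0_integral_ge_cst_itv _ _ a0) ?powR_ge0 //.
- exact: measurable_powR_norm_phi.
- by move=> u /phi_ge yu; rewrite ge0_ler_powR ?nnegrE.
Qed.

Lemma exp_decay_of_halving r C T : 0 < C -> 0 < T ->
  (forall t x s, 0 <= t <= T -> `|x| <= r -> S s -> `|phi t x s| <= C * `|x|) ->
  (forall x s, `|x| <= r -> S s -> `|phi T x s| <= `|x| / 2) ->
  exists M lam : R, 0 < M /\ 0 < lam /\ forall t x s, 0 <= t -> `|x| <= r -> S s ->
    `|phi t x s| <= M * expR (- lam * t) * `|x|.
Proof.
move=> C0 T0 phi_le_C phi_halves.
have ln2_gt0 : 0 < ln (2 : R) by rewrite ln_gt0 // ltr1n.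
pose lam := ln (2 : R) / T.
have lam_gt0 : 0 < lam by rewrite divr_gt0.
have exp_lamT : expR (lam * T) = 2 by rewrite divfK ?gt_eqF // lnK // posrE.
exists (2 * C), lam; split; first exact: mulr_gt0.
split => // t x s t0; move: t t0 x s.
apply: (ge0_window_ind T0) => [t /andP[t0 tT]|t tT IH] x s xr Ss.
  have : expR (- lam * T) <= expR (- lam * t) by rewrite ler_expR !mulNr lerN2 ler_pM2l.
  rewrite mulNr expRN exp_lamT => half_le.
  rewrite (le_trans (phi_le_C t x s _ xr Ss)) ?t0 // ler_wpM2r //; nra.
have T_le_t : 0 <= T <= t by rewrite !ltW.
have phiT_le := phi_halves x s xr Ss.
rewrite (phi_split x Ss T_le_t) (le_trans (IH _ _ _ (S_tshift Ss (ltW T0)))) //.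
  by rewrite (le_trans phiT_le) // ler_pdivrMr //; have := normr_ge0 x; lra.
have -> : expR (- lam * (t - T)) = expR (- lam * t) * 2.
  by rewrite -exp_lamT -expRD; congr expR; ring.
rewrite mulrA -[leLHS]mulrA ler_pM2l ?mulr_gt0 ?expR_gt0 //; lra.
Qed.

Lemma USGES_Lp_bound : USGES S phi ->
  forall p, 0 < p -> exists k, nondecr_nonneg k /\ Lp_bound S phi p k.
Proof.
move=> stable p p0.
have /choice[ML ML_spec] : forall n : nat, exists ML : R * R,
    [/\ 0 < ML.1, 0 < ML.2 & forall t x s, 0 <= t -> `|x| <= n.+1%:R -> S s ->
      `|phi t x s| <= ML.1 * expR (- ML.2 * t) * `|x|].
  move=> n; have [M [lam [M0 [lam0 decay]]]] := stable n.+1%:R (ltr0Sn _ _).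
  by exists (M, lam).
pose B n := (ML n).1 `^ p / ((ML n).2 * p).
have B_ge0 n : 0 <= B n.
  by have [_ lam0 _] := ML_spec n; rewrite divr_ge0 ?powR_ge0 // mulr_ge0 ?ltW.
have [k [k_nd B_le_k]] := exists_nondecr_powR_majorant p0 B_ge0.
exists k; split => // x s Ss.
have [M0 lam0 decay] := ML_spec (truncn `|x|).
set M := (ML _).1 in M0 decay; set lam := (ML _).2 in lam0 decay.
have x_le : `|x| <= (truncn `|x|).+1%:R by exact/ltW/truncnS_gt.
apply: (le_trans (ge0_integral_le_exp_decay (C := M `^ p * `|x| `^ p) _
  (mulr_gt0 lam0 p0) _ _)).
- exact: measurable_powR_norm_phi.
- by rewrite mulr_ge0 ?powR_ge0.
- move=> t t0; rewrite powR_ge0 /=.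
  rewrite (@le_trans _ _ ((M * expR (- lam * t) * `|x|) `^ p)) //.
    apply: ge0_ler_powR; rewrite ?nnegrE ?(ltW p0) ?mulr_ge0 ?expR_ge0 ?(ltW M0) //.
    exact: decay.
  rewrite powRM ?mulr_ge0 ?expR_ge0 ?(ltW M0) // powRM ?expR_ge0 ?(ltW M0) //.
  have -> : - (lam * p) * t = - lam * t * p by ring.
  by rewrite -expRM mulrAC.
by rewrite lee_fin mulrAC ler_wpM2r ?powR_ge0 ?B_le_k.
Qed.

Section bounded_transient.
Variables (t1 G0 : R) (beta : R -> R).
Hypotheses (t1_gt0 : 0 < t1) (G0_gt0 : 0 < G0) (Kbeta : class_Kinf beta).
Hypothesis beta_lin0 : (limf_esup (fun r : R => (beta r / r)%:E) (0%R^'+) < +oo)%E.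
Hypothesis phi_le_beta :
  forall t x s, 0 <= t <= t1 -> S s -> `|phi t x s| <= G0 * beta `|x|.

Lemma phi_origin t s : 0 <= t -> S s -> phi t 0 s = 0.
Proof.
have [_ _ _ beta0 _] := Kbeta.
have phi0_early u s' : 0 <= u <= t1 -> S s' -> phi u 0 s' = 0.
  move=> u_le Ss'; apply/normr0_eq0/le_anti.
  by rewrite normr_ge0 (le_trans (phi_le_beta _ u_le Ss')) // normr0 beta0 mulr0.
move=> t0 Ss; move: t t0 s Ss.
apply: (ge0_window_ind t1_gt0) => [t /phi0_early //|t t1_lt_t IH] s Ss.
have t1_le_t : 0 <= t1 <= t by rewrite !ltW.
rewrite (phi_split 0 Ss t1_le_t) phi0_early ?lexx ?(ltW t1_gt0) //.
by apply: IH; exact: S_tshift Ss (ltW t1_gt0).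
Qed.

Section Lp_stable.
Variables (p : R) (k : R -> R).
Hypotheses (p_gt0 : 0 < p) (k_nd : nondecr_nonneg k) (Lp : Lp_bound S phi p k).

Lemma phi_le_beta_of_Lp t x s y : S s -> t1 <= t -> 0 <= y ->
  k `|x| `^ p * `|x| `^ p < y `^ p * t1 -> `|phi t x s| <= G0 * beta y.
Proof.
move=> Ss t1_le_t y0 Lp_lt; rewrite leNgt; apply/negP => beta_lt_phi.
suff : y `^ p * t1 <= k `|x| `^ p * `|x| `^ p by rewrite leNgt Lp_lt.
apply: (Lp_bound_level_time (a := t - t1) _ Lp Ss);
  rewrite ?subr_ge0 ?(ltW p_gt0) ?(ltW t1_gt0) //.
move=> u /andP[t_le_u]; rewrite subrK => u_le_t.
have u_le : 0 <= u <= t by rewrite u_le_t (le_trans _ t_le_u) // subr_ge0.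
have phi_le : `|phi t x s| <= G0 * beta `|phi u x s|.
  have [u0 _] := andP u_le.
  rewrite (phi_split x Ss u_le) phi_le_beta ?subr_ge0 ?u_le_t //=; last exact: S_tshift.
  lra.
apply: ltW; apply: (class_Kinf_reflect_lt Kbeta (normr_ge0 _)).
by rewrite -(ltr_pM2l G0_gt0) (lt_le_trans beta_lt_phi).
Qed.

Lemma phi_linear_bound r : exists C, 0 < C /\
  forall t x s, 0 <= t -> `|x| <= r -> S s -> `|phi t x s| <= C * `|x|.
Proof.
have [k_ge0 k_mono] := k_nd.
(* [(c |x|)^p t1 = (k r ^ p + 1) |x|^p] beats the L^p bound of any [x] in the ball. *)
pose c := ((k r `^ p + 1) / t1) `^ p^-1.
have c_ge0 : 0 <= c := powR_ge0 _ _.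
have [Lb [Lb_gt0 beta_le_Lb]] := class_Kinf_le_linear Kbeta beta_lin0 r.
have [La [La_gt0 beta_le_La]] := class_Kinf_le_linear Kbeta beta_lin0 (c * r).
exists (G0 * (Lb + La * c)); split.
  by rewrite mulr_gt0 // ltr_pwDl // mulr_ge0 // ltW.
move=> t x s t0 xr Ss.
have [->|x_neq0] := eqVneq x 0; first by rewrite phi_origin // !normr0 mulr0.
have x_gt0 : 0 < `|x| by rewrite normr_gt0.
have [t_le_t1|t1_lt_t] := leP t t1.
  rewrite (le_trans (phi_le_beta x _ Ss)) ?t0 // -mulrA ler_pM2l // mulrDl.
  rewrite (le_trans (beta_le_Lb `|x| _)) ?normr_ge0 ?xr // lerDl.
  by rewrite !mulr_ge0 // ltW.
rewrite (le_trans (phi_le_beta_of_Lp (y := c * `|x|) Ss (ltW t1_lt_t) _ _)) ?mulr_ge0 //.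
  rewrite powRM // /c powRVK ?gt_eqF ?divr_ge0 ?addr_ge0 ?powR_ge0 ?(ltW t1_gt0) //.
  rewrite mulrAC divfK ?gt_eqF // ltr_pM2r ?powR_gt0 //.
  apply: (@le_lt_trans _ _ (k r `^ p)); last by rewrite ltrDl.
  have r0 : 0 <= r := le_trans (normr_ge0 x) xr.
  by apply: ge0_ler_powR; rewrite ?nnegrE ?(ltW p_gt0) ?k_ge0 ?k_mono.
rewrite -mulrA ler_pM2l // (le_trans (beta_le_La _ _)) ?mulr_ge0 ?ler_wpM2l //.
by rewrite mulrA mulrDl lerDr mulr_ge0 ?ltW.
Qed.

Lemma phi_halving_time r : exists T, 0 < T /\
  forall x s, `|x| <= r -> S s -> `|phi T x s| <= `|x| / 2.
Proof.
have [k_ge0 k_mono] := k_nd.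
have [C [C_gt0 phi_le_C]] := phi_linear_bound r.
have [C' [C'_gt0 phi_le_C']] := phi_linear_bound (C * r).
(* Staying above [|x| / (2 C')] during [0, T] would beat the L^p bound. *)
pose T := (2 * C' * k r) `^ p + 1.
have T_gt0 : 0 < T by rewrite ltr_pwDr ?powR_ge0.
exists T; split => // x s xr Ss.
have [->|x_neq0] := eqVneq x 0.
  by rewrite phi_origin ?(ltW T_gt0) // normr0 mul0r.
have x_gt0 : 0 < `|x| by rewrite normr_gt0.
rewrite leNgt; apply/negP => half_lt_phi.
pose a := `|x| / (2 * C').
have a_gt0 : 0 < a by rewrite divr_gt0 ?mulr_gt0.
have : a `^ p * T <= k `|x| `^ p * `|x| `^ p.
  apply: (Lp_bound_level_time (a := 0) _ Lp Ss);
    rewrite ?lexx ?(ltW p_gt0) ?(ltW T_gt0) ?(ltW a_gt0) //.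
  move=> u /andP[u0]; rewrite add0r => u_le_T.
  have u_le : 0 <= u <= T by rewrite u0.
  have phiu_le : `|phi u x s| <= C * r.
    by rewrite (le_trans (phi_le_C u x s u0 xr Ss)) // ler_pM2l.
  have phiT_le : `|phi T x s| <= C' * `|phi u x s|.
    by rewrite (phi_split x Ss u_le) phi_le_C' ?subr_ge0 //; exact: S_tshift.
  by rewrite /a ler_pdivrMr ?mulr_gt0 //; lra.
have x_eq : `|x| = 2 * C' * a by rewrite /a mulrC divfK ?gt_eqF ?mulr_gt0.
have Lp_eq : k `|x| `^ p * `|x| `^ p = (k `|x| * (2 * C')) `^ p * a `^ p.
  rewrite -!powRM ?(ltW a_gt0) ?mulr_ge0 ?k_ge0 ?(ltW C'_gt0) //.
  by rewrite -mulrA -x_eq.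
rewrite Lp_eq mulrC ler_pM2r ?powR_gt0 // => T_le.
have : (k `|x| * (2 * C')) `^ p <= (2 * C' * k r) `^ p.
  have r0 : 0 <= r := le_trans (normr_ge0 x) xr.
  apply: ge0_ler_powR; rewrite ?nnegrE ?(ltW p_gt0) ?mulr_ge0 ?k_ge0 ?(ltW C'_gt0) //.
  by rewrite mulrC ler_pM2l ?mulr_gt0 // k_mono.
rewrite /T in T_le; lra.
Qed.

Lemma Lp_bound_USGES : USGES S phi.
Proof.
move=> r _.
have [C [C_gt0 phi_le_C]] := phi_linear_bound r.
have [T [T_gt0 phi_halves]] := phi_halving_time r.
apply: (exp_decay_of_halving C_gt0 T_gt0 _ phi_halves).
by move=> t x s /andP[t0 _]; exact: phi_le_C.
Qed.

End Lp_stable.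
End bounded_transient.
End trajectories.

Theorem theorem2 (R : realType) (X : completeNormedModType R) (Q : Type)
    (S : set (R -> Q)) (phi : R -> X -> (R -> Q) -> X)
    (t1 G0 : R) (beta : R -> R) :
  forward_complete_dynsys S phi ->
  0 < t1 -> 0 < G0 ->
  class_Kinf beta ->
  (limf_esup (fun r : R => (beta r / r)%:E) (0%R^'+) < +oo)%E ->
  (forall t x s, 0 <= t <= t1 -> S s -> `|phi t x s| <= G0 * beta `|x|) ->
  [/\ (USGES S phi <->
        forall p : R, 0 < p -> exists k : R -> R,
          nondecr_nonneg k /\ Lp_bound S phi p k),
      (USGES S phi <->
        exists p : R, 0 < p /\ exists k : R -> R,
          nondecr_nonneg k /\ Lp_bound S phi p k)
    & ((forall p : R, 0 < p -> exists k : R -> R,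
          nondecr_nonneg k /\ Lp_bound S phi p k) <->
       (exists p : R, 0 < p /\ exists k : R -> R,
          nondecr_nonneg k /\ Lp_bound S phi p k))].
Proof.
move=> dynsys t1_gt0 G0_gt0 Kbeta beta_lin0 phi_le_beta.
have every_p := USGES_Lp_bound dynsys.
have some_p (Lp_some : exists p, 0 < p /\ exists k,
    nondecr_nonneg k /\ Lp_bound S phi p k) : USGES S phi.
  have [p [p_gt0 [k [k_nd Lp]]]] := Lp_some.
  exact (Lp_bound_USGES dynsys t1_gt0 G0_gt0 Kbeta beta_lin0 phi_le_beta p_gt0 k_nd Lp).
have every_some (Lp_every : forall p, 0 < p -> exists k,
    nondecr_nonneg k /\ Lp_bound S phi p k) : exists p, 0 < p /\ exists k,
    nondecr_nonneg k /\ Lp_bound S phi p k.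
  by exists 1; split => //; exact: Lp_every.
split; split.
- exact: every_p.
- by move/every_some/some_p.
- by move/every_p/every_some.
- exact: some_p.
- exact: every_some.
- by move/some_p/every_p.
Qed.
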